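(* Let $N\ge M\ge 1$. Let $H:\mathbb{R}^N\times\mathbb{R}^N\to\mathbb{R}$ be continuous, $\mathbb{Z}^N$-periodic in its first variable, with $H(y,0)\ge 0$ for all $y$. Let $\beta$ and $a$ be as in the context, and let $dq_0$ be a positive Radon measure on $\mathbb{R}^M$ satisfying condition (B) and $$\int_{|z|<1}|z|^{\gamma}\,dq_0(z)+\int_{|z|\ge 1}|z|^{\gamma-1}\,dq_0(z)<\infty,$$ with $\gamma=2$ in case (I) and $\gamma=1$ in case (II), where (I) $\;H(y,\nabla u)-a(y)\int_{\mathbb{R}^M}[u(y+\beta(z))-u(y)-\langle\nabla u(y),\beta(z)\rangle]\,dq_0(z)=0$ in $\mathbb{T}^N$, (II) $\;H(y,\nabla u)-a(y)\int_{\mathbb{R}^M}[u(y+\beta(z))-u(y)]\,dq_0(z)=0$ in $\mathbb{T}^N$. Let $u$ be an upper semicontinuous, $\mathbb{Z}^N$-periodic viscosity subsolution of (I) (resp. of (II)). If $u$ attains its maximum over $\mathbb{T}^N$ at some point $\bar y$, then $u$ is constant on $\mathbb{T}^N$.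
   Context: $\mathbb{T}^N=[0,1]^N$ is the unit torus; functions on $\mathbb{T}^N$ are identified with $\mathbb{Z}^N$-periodic functions on $\mathbb{R}^N$. $\beta:\mathbb{R}^M\to\mathbb{R}^N$ is continuous with $\beta(cz)=c\beta(z)$ for all $c>0$ and $|\beta(z)|\le B_1|z|$ for all $z$, for some constant $B_1>0$. $a:\mathbb{R}^N\to\mathbb{R}$ is continuous, $\mathbb{Z}^N$-periodic, with $a\ge a_0>0$ and $|a(y)-a(y')|\le L|y-y'|^{\theta_1}$ for some constants $a_0>0$, $L>0$, $\theta_1\in(0,1]$. Condition (B): let $S_0=\mathrm{supp}(dq_0)$. For any two points $y,y'\in\mathbb{T}^N$ there exist finitely many points $y_1,\dots,y_m\in\mathbb{T}^N$ with $y_1=y$, $y_m=y'$, such that for any positive numbers $\varepsilon_i>0$ ($1\le i\le m$) there exist subsets $J_i\subset S_0$ ($1\le i\le m-1$) with $y_i+\beta(z)\in B_{\varepsilon_i}(y_{i+1})$ (modulo $\mathbb{Z}^N$) for all $z\in J_i$ and $\int_{J_i}1\,dq_0(z)>0$. Viscosity subsolution: an upper semicontinuous periodic $u$ is a viscosity subsolution of (I) if for every $\hat y$ and every $\phi\in C^2(\mathbb{R}^N)$ such that $u-\phi$ attains a global maximum at $\hat y$ and $u(\hat y)=\phi(\hat y)$, the function $z\mapsto u(\hat y+\beta(z))-u(\hat y)-\langle\nabla\phi(\hat y),\beta(z)\rangle$ is $dq_0$-integrable and $H(\hat y,\nabla\phi(\hat y))-a(\hat y)\int_{\mathbb{R}^M}[u(\hat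 y+\beta(z))-u(\hat y)-\langle\nabla\phi(\hat y),\beta(z)\rangle]\,dq_0(z)\le 0$. For (II) the same with the term $\langle\nabla\phi(\hat y),\beta(z)\rangle$ removed from the integrand. *)

From HB Require Import structures.
From mathcomp Require Import all_boot all_order all_algebra.
From mathcomp Require Import all_classical all_reals all_analysis.
Set Implicit Arguments. Unset Strict Implicit. Unset Printing Implicit Defensive.
Import Order.TTheory GRing.Theory Num.Theory.
Import numFieldNormedType.Exports.
Local Open Scope classical_set_scope.
Local Open Scope ring_scope.

Section Defs.
Variable R : realType.

Definition eucl {n} (x : 'rV[R]_n) : R := Num.sqrt (\sum_(i < n) x 0 i ^+ 2).

Definition dotp {n} (x y : 'rV[R]_n) : R := \sum_(i < n) x 0 i * y 0 i.

Definition intvec {n} (k : 'rV[int]_n) : 'rV[R]_n := map_mx (fun z : int => z%:~R) k.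

Definition Zn_periodic {n} {T : Type} (f : 'rV[R]_n -> T) : Prop :=
  forall (y : 'rV[R]_n) (k : 'rV[int]_n), f (y + intvec k) = f y.

Definition usc {n} (u : 'rV[R]_n -> R) : Prop :=
  forall x (e : R), 0 < e -> \forall y \near x, u y < u x + e.

Definition evec {n} (i : 'I_n) : 'rV[R]_n := delta_mx 0 i.

Definition C2 {n} (phi : 'rV[R]_n -> R) : Prop :=
  continuous phi /\
  (forall i x, derivable phi x (evec i)) /\
  (forall i, continuous (fun x => 'D_(evec i) phi x)) /\
  (forall i j x, derivable (fun y => 'D_(evec i) phi y) x (evec j)) /\
  (forall i j, continuous (fun x => 'D_(evec j) (fun y => 'D_(evec i) phi y) x)).

Definition grad {n} (phi : 'rV[R]_n -> R) (y : 'rV[R]_n) : 'rV[R]_n :=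
  \row_(i < n) 'D_(evec i) phi y.

Definition RvBorel (m : nat) := g_sigma_algebraType (@open 'rV[R]_m).

Definition msupport {m} (mu : set (RvBorel m) -> \bar R) : set 'rV[R]_m :=
  [set z | forall U : set 'rV[R]_m, open U -> U z -> (0 < mu U)%E].

Definition radon {m} (mu : {measure set (RvBorel m) -> \bar R}) : Prop :=
  forall K : set 'rV[R]_m, compact K -> (mu K < +oo)%E.

Definition condB {N M} (beta : 'rV[R]_M -> 'rV[R]_N)
  (mu : {measure set (RvBorel M) -> \bar R}) : Prop :=
  forall y y' : 'rV[R]_N, exists (m : nat) (ys : nat -> 'rV[R]_N),
    (1 <= m)%N /\ ys 1%N = y /\ ys m = y' /\
    forall eps : nat -> R, (forall i, (1 <= i <= m)%N -> 0 < eps i) ->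
      exists J : nat -> set (RvBorel M),
        forall i, (1 <= i <= m.-1)%N ->
          [/\ measurable (J i),
              J i `<=` msupport mu,
              (forall z, J i z -> exists k : 'rV[int]_N,
                 eucl (ys i + beta z - (ys i.+1 + intvec k)) < eps i) &
              (0 < \int[mu]_(z in J i) 1)%E].

(* Viscosity subsolution. [compensated = true] is equation (I),
   [compensated = false] is equation (II). *)
Definition visc_sub {N M} (compensated : bool)
  (H : 'rV[R]_N -> 'rV[R]_N -> R) (a : 'rV[R]_N -> R)
  (beta : 'rV[R]_M -> 'rV[R]_N) (mu : {measure set (RvBorel M) -> \bar R})
  (u : 'rV[R]_N -> R) : Prop :=
  usc u /\ Zn_periodic u /\
  forall (yh : 'rV[R]_N) (phi : 'rV[R]_N -> R),
    C2 phi ->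
    (forall y, u y - phi y <= u yh - phi yh) ->
    u yh = phi yh ->
    let g := fun z : RvBorel M =>
      u (yh + beta z) - u yh
        - (if compensated then dotp (grad phi yh) (beta z) else 0) in
    mu.-integrable setT (fun z => (g z)%:E) /\
    H yh (grad phi yh) - a yh * fine (\int[mu]_(z in setT) (g z)%:E) <= 0.

End Defs.
Arguments intvec {R n}.

From HB Require Import structures.
From mathcomp Require Import all_boot all_order all_algebra.
From mathcomp Require Import all_classical all_reals all_analysis.
Import Order.TTheory GRing.Theory Num.Theory.
Import numFieldNormedType.Exports.
Local Open Scope classical_set_scope.
Local Open Scope ring_scope.

(* At a maximum point [yh] the constant [u yh] is an admissible test function.
   Its gradient vanishes, so [H yh 0 >= 0] and [a > 0] force the integral of the
   nonpositive jump [u (yh + beta z) - u yh] to be nonnegative, hence the jump is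
   zero for q0-almost every z.  Condition (B) links any two points by a chain
   whose links are realised, up to eps and Z^N, by sets of jumps of positive
   mass; upper semicontinuity and periodicity then carry the maximum along each
   link. *)

Section Generic.
Context {R : realType}.

Lemma ae_witness {d} {T : measurableType d} {mu : {measure set T -> \bar R}}
    {P : T -> Prop} {J : set T} :
  {ae mu, forall x, P x} -> measurable J -> (0 < mu J)%E -> exists2 z, J z & P z.
Proof.
move=> [A [mA muA0 notPA]] mJ muJ; apply: contrapT => noP.
have JA : J `<=` A by move=> z Jz; apply: notPA => Pz; apply: noP; exists z.
by move: muJ; rewrite -muA0 ltNge le_measure ?inE.
Qed.

Lemma nonpos_integral_ge0_ae_eq0 {d} {T : measurableType d}
    {mu : {measure set T -> \bar R}} {f : T -> \bar R} :
  mu.-integrable setT f -> (forall x, f x <= 0)%E ->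
  (0 <= \int[mu]_x f x)%E -> {ae mu, forall x, f x = 0%E}.
Proof.
move=> fint fle0 intf_ge0.
have intf : (\int[mu]_x f x = - \int[mu]_x `|f x|)%E.
  rewrite -integral_ge0N; last by move=> x _; exact: abse_ge0.
  by apply: eq_integral => x _; rewrite lee0_abs ?oppeK.
have : ae_eq mu setT f (cst 0%E).
  apply/ae_eq_integral_abs => //; first exact: measurable_int fint.
  apply/eqP; rewrite eq_le integral_ge0 ?andbT; last by move=> x _; exact: abse_ge0.
  by rewrite -oppe_ge0 -intf.
by apply: filterS => x; apply.
Qed.

Lemma eucl_coord_le {n} (v : 'rV[R]_n) j : `|v 0 j| <= eucl v.
Proof.
rewrite /eucl -sqrtr_sqr ler_sqrt ?sumr_ge0 // => [|i _]; last exact: sqr_ge0.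
by rewrite (bigD1 j) //= lerDl sumr_ge0 // => i _; exact: sqr_ge0.
Qed.

Lemma nbhs_eucl {n} {P : set 'rV[R]_n} {x : 'rV[R]_n} : (\forall y \near x, P y) ->
  exists2 e : R, 0 < e & forall y, eucl (y - x) < e -> P y.
Proof.
move=> /nbhs_ballP [e e0 Pe]; exists e => // y xy; apply: Pe.
split => // i j; rewrite ord1 /ball /= -normrN opprB.
by apply: le_lt_trans xy; have := eucl_coord_le (y - x) j; rewrite !mxE.
Qed.

Lemma C2_cst {n} (c : R) : C2 (fun _ : 'rV[R]_n => c).
Proof.
have D0 v : (fun x => 'D_v (fun _ : 'rV[R]_n => c) x) = cst 0.
  by apply/funext => x; exact: derive_cst.
split; first exact: cst_continuous.
split; first by move=> i x; exact: derivable_cst.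
split; first by move=> i; rewrite D0; exact: cst_continuous.
split; first by move=> i j x; rewrite D0; exact: derivable_cst.
by move=> i j; rewrite D0; under eq_fun do rewrite derive_cst; exact: cst_continuous.
Qed.

Lemma grad_cst {n} (c : R) (y : 'rV[R]_n) : grad (fun _ => c) y = 0.
Proof. by apply/rowP => i; rewrite !mxE derive_cst. Qed.

End Generic.

Section MaximumPropagation.
Variables (R : realType) (N M : nat) (compensated : bool).
Variables (H : 'rV[R]_N -> 'rV[R]_N -> R) (a : 'rV[R]_N -> R).
Variables (beta : 'rV[R]_M -> 'rV[R]_N) (mu : {measure set (RvBorel R M) -> \bar R}).
Variable u : 'rV[R]_N -> R.
Hypothesis H_ge0 : forall y, 0 <= H y 0.
Hypothesis a_gt0 : forall y, 0 < a y.
Hypothesis u_sub : visc_sub compensated H a beta mu u.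

Lemma visc_sub_max_jump_ae0 {yh : 'rV[R]_N} : (forall y, u y <= u yh) ->
  {ae mu, forall z, u (yh + beta z) = u yh}.
Proof.
move=> umax; have [_ [_ test]] := u_sub.
have [] := test yh (fun _ => u yh) (C2_cst (u yh)) => //.
  by move=> y; rewrite subrr subr_le0.
rewrite grad_cst /=; set g := fun z => _.
have gE z : g z = (u (yh + beta z) - u yh)%:E.
  by rewrite /g /dotp; case: ifP => _; rewrite ?big1 ?subr0 // => i _; rewrite mxE mul0r.
move=> gint Hg; have gfin := integrable_fin_num measurableT gint.
have : {ae mu, forall z, g z = 0%E}.
  apply: nonpos_integral_ge0_ae_eq0 gint _ _ => [z|].
    by rewrite gE lee_fin subr_le0.
  rewrite -(fineK gfin) lee_fin -(pmulr_rge0 _ (a_gt0 yh)).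
  by apply: le_trans (H_ge0 yh) _; rewrite -subr_le0.
by apply: filterS => z; rewrite gE => -[/eqP]; rewrite subr_eq0 => /eqP.
Qed.

Lemma visc_sub_max_transport (y y' : 'rV[R]_N) : (forall x, u x <= u y) ->
  (forall d : R, 0 < d -> exists J : set (RvBorel R M),
     [/\ measurable J, (0 < \int[mu]_(z in J) 1)%E &
         forall z, J z -> exists k : 'rV[int]_N,
           eucl (y + beta z - (y' + intvec k)) < d]) ->
  u y' = u y.
Proof.
move=> umax reach; have [u_usc [u_per _]] := u_sub.
apply/eqP; rewrite eq_le umax /=; apply/ler_addgt0Pr => e e0.
have [d d0 near_y'] := nbhs_eucl (u_usc y' e e0).
have [J [mJ J_gt0 J_reach]] := reach d d0.
rewrite integral_cst // mul1e in J_gt0.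
have [z Jz uz] := ae_witness (visc_sub_max_jump_ae0 umax) mJ J_gt0.
have [k zk] := J_reach z Jz.
have : u (y + beta z - intvec k) < u y' + e.
  by apply: near_y'; rewrite opprD addrA addrAC in zk.
by rewrite -(u_per _ k) subrK uz => /ltW.
Qed.

Lemma condB_max_constant (ybar : 'rV[R]_N) : condB beta mu ->
  (forall y, u y <= u ybar) -> forall y, u y = u ybar.
Proof.
move=> chain umax y; have [m [ys [m_ge1 [ys1 [ysm reach]]]]] := chain ybar y.
suff chain_max j : (j < m)%N -> u (ys j.+1) = u ybar.
  by rewrite -ysm -(prednK m_ge1) chain_max // prednK.
elim: j => [_|j IH jm]; first by rewrite ys1.
have ij : (1 <= j.+1 <= m.-1)%N by rewrite ltn0Sn -ltnS prednK.
rewrite -(IH (ltnW jm)); apply: visc_sub_max_transport => [x|d d0].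
  by rewrite IH ?(ltnW jm).
have [J HJ] := reach (fun _ => d) (fun _ _ => d0).
by have [mJ _ J_reach J_gt0] := HJ _ ij; exists (J j.+1).
Qed.

End MaximumPropagation.

Theorem theorem2p1 (R : realType) (N M : nat) (compensated : bool)
  (H : 'rV[R]_N -> 'rV[R]_N -> R)
  (beta : 'rV[R]_M -> 'rV[R]_N) (a : 'rV[R]_N -> R)
  (q0 : {measure set (RvBorel R M) -> \bar R})
  (B1 a0 L theta1 : R) (u : 'rV[R]_N -> R) (ybar : 'rV[R]_N) :
  (1 <= M)%N -> (M <= N)%N ->
  continuous (fun p : 'rV[R]_N * 'rV[R]_N => H p.1 p.2) ->
  (forall (y p : 'rV[R]_N) (k : 'rV[int]_N), H (y + intvec k) p = H y p) ->
  (forall y, 0 <= H y 0) ->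
  continuous beta ->
  (forall (c : R) z, 0 < c -> beta (c *: z) = c *: beta z) ->
  0 < B1 -> (forall z, eucl (beta z) <= B1 * eucl z) ->
  continuous a -> Zn_periodic a ->
  0 < a0 -> (forall y, a0 <= a y) ->
  0 < L -> 0 < theta1 -> theta1 <= 1 ->
  (forall y y', `|a y - a y'| <= L * powR (eucl (y - y')) theta1) ->
  radon q0 -> condB beta q0 ->
  (let gam := if compensated then 2%N else 1%N in
   \int[q0]_(z in [set z : RvBorel R M | (eucl z < 1)%R]) ((eucl z ^+ gam)%R)%:E
   + \int[q0]_(z in [set z : RvBorel R M | (1 <= eucl z)%R]) ((eucl z ^+ gam.-1)%R)%:E
   < +oo)%E ->
  visc_sub compensated H a beta q0 u ->
  (forall y, u y <= u ybar) ->
  forall y, u y = u ybar.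
Proof.
move=> _ _ _ _ H_ge0 _ _ _ _ _ _ a0_gt0 a_ge_a0 _ _ _ _ _ chain _ u_sub umax.
have a_gt0 y : 0 < a y := lt_le_trans a0_gt0 (a_ge_a0 y).
exact: condB_max_constant H_ge0 a_gt0 u_sub ybar chain umax.
Qed.
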